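(* Let $r\ge 2$ and $n\ge 3$, and let $\lambda$ be the word morphism on $\{E,N\}$ given by $\lambda(E)=E^{r-1}N$, $\lambda(N)=E^{r-2}N$, and $\theta$ the morphism given by $\theta(E)=E$, $\theta(N)=EN$. Then applying $\lambda$ to the Christoffel word of $\mathcal{D}_n$ yields the Christoffel word of $\mathcal{D}_{n+1}$, and applying $\theta\circ\lambda\circ\theta^{-1}$ to the Christoffel word of $\mathcal{C}_n$ yields the Christoffel word of $\mathcal{C}_{n+1}$.
   Context: Fix an integer $r\ge 2$. Define $c_1=0$, $c_2=1$, $c_n=rc_{n-1}-c_{n-2}$ for $n\ge 3$. For nonnegative integers $a,b$, the maximal Dyck path $\mathcal{P}(a,b)$ is the lattice path from $(0,0)$ to $(a,b)$ using unit north and east steps that never passes strictly above the line segment from $(0,0)$ to $(a,b)$ and is closest to that segment. For $n\ge 3$ let $\mathcal{C}_n=\mathcal{P}(c_{n-1},c_{n-2})$ and $\mathcal{D}_n=\mathcal{P}(c_{n-1}-c_{n-2},c_{n-2})$. The (lower) Christoffel word of such a path is the word over $\{E,N\}$ obtained by reading its steps from $(0,0)$ onward, recording $E$ for each east step and $N$ for each north step. The Christoffel word of $\mathcal{C}_n$ equals $\theta$ applied to the Christoffel word of $\mathcal{D}_n$; $\theta^{-1}$ denotes the inverse of $\theta$ on words in its image (replacing each factor $EN$ coming from an $N$ by $N$). *)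

From mathcomp Require Import all_boot.
Set Implicit Arguments. Unset Strict Implicit. Unset Printing Implicit Defensive.

(* Steps of a lattice path: E = unit east step, N = unit north step. *)
Inductive step := E | N.

Definition isE (s : step) : bool := if s is E then true else false.
Definition isN (s : step) : bool := if s is N then true else false.

(* The sequence c_1 = 0, c_2 = 1, c_n = r c_(n-1) - c_(n-2).
   cpair r k = (c_(k+1), c_(k+2)).  For r >= 2 the sequence is nondecreasing,
   so truncated subtraction on nat is exact. *)
Fixpoint cpair (r k : nat) : nat * nat :=
  match k with
  | 0 => (0, 1)
  | k'.+1 => let '(a, b) := cpair r k' in (b, r * b - a)
  end.

(* c r n = c_n for n >= 1 (c r 0 is an unused junk value). *)
Definition c (r n : nat) : nat := (cpair r n.-1).1.

Definition xcoord (w : seq step) (k : nat) : nat := count isE (take k w).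
Definition ycoord (w : seq step) (k : nat) : nat := count isN (take k w).

(* w is a lattice path from (0,0) to (a,b) never passing strictly above the
   segment from (0,0) to (a,b). *)
Definition below_path (a b : nat) (w : seq step) : Prop :=
  count isE w = a /\ count isN w = b /\
  forall k, k <= size w -> ycoord w k * a <= xcoord w k * b.

(* w is the maximal Dyck path P(a,b): among all such paths it is the one
   closest to the segment, i.e. it weakly dominates every other one. *)
Definition maximal_dyck (a b : nat) (w : seq step) : Prop :=
  below_path a b w /\
  forall w', below_path a b w' -> forall k, ycoord w' k <= ycoord w k.

Definition is_christoffel_C (r n : nat) (w : seq step) : Prop :=
  maximal_dyck (c r n.-1) (c r n.-2) w.
Definition is_christoffel_D (r n : nat) (w : seq step) : Prop :=
  maximal_dyck (c r n.-1 - c r n.-2) (c r n.-2) w.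

Definition morph (f : step -> seq step) (w : seq step) : seq step :=
  flatten (map f w).

Definition lambda_img (r : nat) (s : step) : seq step :=
  match s with
  | E => rcons (nseq r.-1 E) N
  | N => rcons (nseq r.-2 E) N
  end.
Definition lambda (r : nat) := morph (lambda_img r).

Definition theta_img (s : step) : seq step :=
  match s with E => [:: E] | N => [:: E; N] end.
Definition theta := morph theta_img.

From mathcomp Require Import all_boot.
From mathcomp Require Import zify.

Set Implicit Arguments.
Unset Strict Implicit.
Unset Printing Implicit Defensive.

(* A path from (0,0) to (a,b) all of whose lattice points (x,y) satisfy
   0 <= b x - a y < a + b is the maximal Dyck path P(a,b): after k steps it
   sits at the highest point of the antidiagonal x + y = k below the segment.
   The morphisms theta = (E -> E, N -> EN) and mu = (E -> EN, N -> N) carry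
   such strip paths to strip paths, of endpoints (a + b, b) and (a, a + b),
   and lambda_r = theta^(r-2) o mu.  Starting from D_3 = P(1,0) = E this gives
   D_(n+1) = lambda_r(D_n) and C_n = theta(D_n); uniqueness of maximal paths
   and injectivity of theta then handle arbitrary words. *)

Definition in_strip (a b : nat) (p : seq step) : bool :=
  count isN p * a <= count isE p * b < count isN p * a + a + b.

Definition strip_path (a b : nat) (w : seq step) : Prop :=
  [/\ count isE w = a, count isN w = b & forall k, in_strip a b (take k w)].

Lemma size_step_count (w : seq step) : size w = count isE w + count isN w.
Proof. by elim: w => //= -[] w IH /=; lia. Qed.

Lemma strip_path_pos a b w : strip_path a b w -> 0 < a + b.
Proof. by case=> _ _ /(_ 0); rewrite take0 /in_strip /= !mul0n. Qed.

Lemma strip_path_maximal a b w : strip_path a b w -> maximal_dyck a b w.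
Proof.
case=> hE hN hw; split=> [|w' [hE' [hN' hw']] k].
  by do 2!split=> //; move=> k _; case/andP: (hw k).
case: (leqP k (size w)) => hk; last first.
  rewrite /ycoord (take_oversize (ltnW hk)) hN -hN'.
  by rewrite -[in X in _ <= X](cat_take_drop k w') count_cat leq_addr.
have hk' : k <= size w' by rewrite !size_step_count hE' hN' -hE -hN in hk *.
have := hw' k hk'; have := hw k; rewrite /in_strip /ycoord /xcoord.
have := size_step_count (take k w); have := size_step_count (take k w').
rewrite !size_takel //; nia.
Qed.

Lemma ycoordS w k : k < size w -> ycoord w k.+1 = ycoord w k + isN (nth E w k).
Proof. by move=> hk; rewrite /ycoord (take_nth E hk) -cats1 count_cat /= addn0. Qed.

Lemma eq_ycoord w1 w2 : size w1 = size w2 -> ycoord w1 =1 ycoord w2 -> w1 = w2.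
Proof.
move=> hs hy; apply: (eq_from_nth (x0 := E) hs) => k hk.
have := hy k.+1; rewrite !ycoordS -?hs // hy => /addnI.
by case: (nth E w1 k); case: (nth E w2 k).
Qed.

Lemma maximal_dyck_unique a b w1 w2 :
  maximal_dyck a b w1 -> maximal_dyck a b w2 -> w1 = w2.
Proof.
move=> [below1 max1] [below2 max2]; apply: eq_ycoord => [|k].
  rewrite !size_step_count.
  by case: below1 below2 => [-> [-> _]] [-> [-> _]].
by apply/eqP; rewrite eqn_leq max1 // max2.
Qed.

Lemma morph_cons f l w : morph f (l :: w) = f l ++ morph f w.
Proof. by []. Qed.

Lemma morph_cat f u v : morph f (u ++ v) = morph f u ++ morph f v.
Proof. by rewrite /morph map_cat flatten_cat. Qed.

Lemma morph_rcons f w l : morph f (rcons w l) = morph f w ++ f l.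
Proof. by rewrite -cats1 morph_cat /morph /= cats0. Qed.

Lemma morph_comp f g w : morph f (morph g w) = morph (fun l => morph f (g l)) w.
Proof. by elim: w => // l w IH; rewrite !morph_cons morph_cat IH. Qed.

Lemma count_morph (P : pred step) f w :
  count P (morph f w) = count isE w * count P (f E) + count isN w * count P (f N).
Proof. by elim: w => // -[] w IH; rewrite morph_cons count_cat IH /=; lia. Qed.

Lemma take_morph_ind f (P Q : seq step -> Prop) w :
  (forall k, P (take k w)) -> Q [::] ->
  (forall u l t, P u -> P (rcons u l) -> Q (morph f u ++ take t (f l))) ->
  forall k, Q (take k (morph f w)).
Proof.
elim/last_ind: w => [|w l IH] hP hQ0 hstep k; first by case: k.
have hw : P w by have := hP (size w); rewrite -cats1 take_size_cat.
rewrite morph_rcons take_cat; case: ltnP => _; last first.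
  by apply: hstep => //; have := hP (size w).+1; rewrite take_oversize ?size_rcons.
apply: IH => // j; case: (leqP j (size w)) => hj; last by rewrite take_oversize 1?ltnW.
by have := hP j; rewrite -cats1 takel_cat.
Qed.

Definition mu_img (s : step) : seq step :=
  match s with E => [:: E; N] | N => [:: N] end.
Definition mu := morph mu_img.

Lemma strip_theta a b w : strip_path a b w -> strip_path (a + b) b (theta w).
Proof.
move=> hs; have hab := strip_path_pos hs; case: hs => hE hN hw.
split; [by rewrite count_morph hE hN /=; lia | by rewrite count_morph hN /=; lia |].
apply: (take_morph_ind (P := in_strip a b) (Q := in_strip _ _) hw) => [|u l t].
  by rewrite /in_strip /=; lia.
rewrite /in_strip -cats1 !count_cat !count_morph /=.
by case: l; case: t => [|[|t]] /=; lia.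
Qed.

Lemma strip_mu a b w : strip_path a b w -> strip_path a (a + b) (mu w).
Proof.
move=> hs; have hab := strip_path_pos hs; case: hs => hE hN hw.
split; [by rewrite count_morph hE /=; lia | by rewrite count_morph hE hN /=; lia |].
apply: (take_morph_ind (P := in_strip a b) (Q := in_strip _ _) hw) => [|u l t].
  by rewrite /in_strip /=; lia.
rewrite /in_strip -cats1 !count_cat !count_morph /=.
by case: l; case: t => [|[|t]] /=; nia.
Qed.

Lemma strip_iter_theta k a b w :
  strip_path a b w -> strip_path (a + k * b) b (iter k theta w).
Proof.
move=> hs; elim: k => [|k IH]; first by rewrite addn0.
by rewrite iterS mulSn addnCA addnC; apply: strip_theta.
Qed.

Lemma theta_E_N j : theta (rcons (nseq j E) N) = rcons (nseq j.+1 E) N.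
Proof. by elim: j => // j IH; rewrite -[theta _]/(E :: theta _) IH. Qed.

Lemma iter_theta_E_N k j :
  iter k theta (rcons (nseq j E) N) = rcons (nseq (j + k) E) N.
Proof. by elim: k => [|k IH]; rewrite ?addn0 // iterS IH theta_E_N addnS. Qed.

Lemma iter_theta_morph k f w :
  iter k theta (morph f w) = morph (fun l => iter k theta (f l)) w.
Proof. by elim: k => // k IH; rewrite iterS IH {1}/theta morph_comp. Qed.

Lemma lambda_iter_theta_mu k w : lambda k.+2 w = iter k theta (mu w).
Proof.
rewrite /mu iter_theta_morph /lambda /morph; congr flatten; apply: eq_map.
by case; symmetry; [exact: (iter_theta_E_N k 1) | exact: (iter_theta_E_N k 0)].
Qed.

Lemma strip_lambda r a b w : 2 <= r ->
  strip_path a b w -> strip_path (a + r.-2 * (a + b)) (a + b) (lambda r w).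
Proof.
case: r => [|[|k]] // _ hs.
by rewrite lambda_iter_theta_mu; apply/strip_iter_theta/strip_mu.
Qed.

Lemma c_lt_next r k : 2 <= r -> c r k.+1 < c r k.+2.
Proof.
move=> hr; rewrite /c /=; elim: k => //= k.
by case: (cpair r k) => x y /=; nia.
Qed.

Lemma c_rec r k : c r k.+3 = r * c r k.+2 - c r k.+1.
Proof. by rewrite /c /=; case: (cpair r k). Qed.

Lemma strip_christoffel_D r k : 2 <= r ->
  strip_path (c r k.+2 - c r k.+1) (c r k.+1) (iter k (lambda r) [:: E]).
Proof.
move=> hr; elim: k => [|k IH].
  by rewrite [c r 2]/c /=; split; last case.
have c12 := c_lt_next k hr; have c23 := c_lt_next k.+1 hr.
have -> : c r k.+3 - c r k.+2 = c r k.+2 - c r k.+1 + r.-2 * c r k.+2.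
  by move: c12 c23; rewrite c_rec; case: r hr {IH} => [|[|s]] //= _; lia.
by have := strip_lambda hr IH; rewrite (subnK (ltnW c12)).
Qed.

Lemma strip_christoffel_C r k : 2 <= r ->
  strip_path (c r k.+2) (c r k.+1) (theta (iter k (lambda r) [:: E])).
Proof.
move=> hr; have := strip_theta (strip_christoffel_D k hr).
by rewrite (subnK (ltnW (c_lt_next k hr))).
Qed.

Fixpoint theta_inv (w : seq step) : seq step :=
  match w with
  | E :: N :: w' => N :: theta_inv w'
  | E :: w' => E :: theta_inv w'
  | _ => [::]
  end.

Lemma thetaK : cancel theta theta_inv.
Proof. by elim=> [|[] u IH] //; case: u IH => [|[] u] //= ->. Qed.

Lemma theta_inj : injective theta.
Proof. exact: can_inj thetaK. Qed.

Theorem mainTheorem3 (r n : nat) (hr : 2 <= r) (hn : 3 <= n) :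
  ((exists w, is_christoffel_D r n w) /\
   (forall w, is_christoffel_D r n w -> is_christoffel_D r n.+1 (lambda r w)))
  /\
  ((exists w u, is_christoffel_C r n w /\ w = theta u) /\
   (forall w u, is_christoffel_C r n w -> w = theta u ->
      is_christoffel_C r n.+1 (theta (lambda r u)))).
Proof.
case: n hn => [|[|[|k]]] // _.
have hD j : is_christoffel_D r j.+3 (iter j (lambda r) [:: E]).
  exact/strip_path_maximal/strip_christoffel_D.
have hC j : is_christoffel_C r j.+3 (theta (iter j (lambda r) [:: E])).
  exact/strip_path_maximal/strip_christoffel_C.
split; split.
- by exists (iter k (lambda r) [:: E]).
- by move=> w /(maximal_dyck_unique (hD k)) <-; apply: (hD k.+1).
- by exists (theta (iter k (lambda r) [:: E])), (iter k (lambda r) [:: E]).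
- by move=> w u /(maximal_dyck_unique (hC k)) <- /theta_inj <-; apply: (hC k.+1).
Qed.
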